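(* Under the assumptions of the previous identification result (binary $D,M(d),Y(d,m)$; $M=M(D)$, $Y=Y(D,M)$, $Y(d)=Y(d,M(d))$; $Y(d,0)=0$ a.s.; $D$ independent of $(M(d),Y(d,1))$ given $X=x$ for $d=0,1$; $P(D=d\mid X=x)>0$ and $P(M=1\mid D=d,X=x)>0$ for $d=0,1$), and assuming moreover $\mathbb{E}[Y\mid D=0,M=1,X=x]>0$, the causal risk ratio $$\mathrm{CRR}(x)=\frac{\mathbb{E}[Y(1)\mid X=x]}{\mathbb{E}[Y(0)\mid X=x]}$$ satisfies $$\mathrm{CRR}(x)=\frac{\mathbb{E}[Y\mid D=1,M=1,X=x]}{\mathbb{E}[Y\mid D=0,M=1,X=x]}\cdot\left\{\frac{P(D=1\mid M=1,X=x)}{P(D=0\mid M=1,X=x)}\right\}\Big/\left\{\frac{P(D=1\mid X=x)}{P(D=0\mid X=x)}\right\}.$$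
   Context: Each unit is a police–civilian encounter; $D$ is race ($1$ = minority), $M$ detainment, $Y$ police use of force, $X$ covariates. The first factor is called the naive risk ratio (computable from administrative records containing only $M=1$ encounters) and the second factor the bias factor. *)

From HB Require Import structures.
From mathcomp Require Import all_boot all_order all_algebra.
From mathcomp Require Import all_classical all_reals all_analysis.
Set Implicit Arguments. Unset Strict Implicit. Unset Printing Implicit Defensive.
Import Order.TTheory GRing.Theory Num.Theory.
Local Open Scope classical_set_scope.
Local Open Scope ring_scope.

Section Defs.
Context (d : measure_display) (T : measurableType d) (R : realType)
        (P : probability T R).

Definition prob (A : set T) : R := fine (P A).

Definition condP (A B : set T) : R := prob (A `&` B) / prob B.

(* conditional expectation of a {0,1}-valued variable Z given event B:
   E[Z | B] = P(Z = 1 | B) *)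
Definition condE (Z : T -> bool) (B : set T) : R := condP [set w | Z w] B.

Definition cond_indep_pair (A U V : T -> bool) (C : set T) : Prop :=
  forall a u v : bool,
    prob ([set w | A w = a] `&` [set w | U w = u] `&` [set w | V w = v] `&` C)
      * prob C
    = prob ([set w | A w = a] `&` C)
      * prob ([set w | U w = u] `&` [set w | V w = v] `&` C).
End Defs.

From HB Require Import structures.
From mathcomp Require Import all_boot all_order all_algebra.
From mathcomp Require Import all_classical all_reals all_analysis.
From mathcomp Require Import ring.
Import Order.TTheory GRing.Theory Num.Theory.
Local Open Scope classical_set_scope.
Local Open Scope ring_scope.

(* The argument has three ingredients, developed in this order.
   1. Identification of each arm: under the exclusion Y(d,0) = 0 a.s., the
      conditional independence of D and (M(d), Y(d,1)) given X = x, and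
      positivity, consistency gives
        E[Y(d) | X = x] = E[Y | D = d, M = 1, X = x] * P(M = 1 | D = d, X = x).
   2. Bayes' rule, in product form:
        P(M = 1 | D = d, X = x) P(D = d | X = x)
          = P(D = d | M = 1, X = x) P(M = 1 | X = x).
   3. A field identity: dividing the instances of step 1 for d = 1 and d = 0
      and eliminating P(M = 1 | D = d, X = x) with step 2, the common factor
      P(M = 1 | X = x) cancels and what is left is the announced product. *)

Section ProbabilityFacts.
Context {d : measure_display} {T : measurableType d} {R : realType}
        (P : probability T R).

Lemma prob_ge0 (A : set T) : 0 <= prob P A.
Proof. by rewrite /prob fine_ge0. Qed.

Lemma prob_le {A B : set T} : measurable A -> measurable B -> A `<=` B ->
  prob P A <= prob P B.
Proof.
move=> mA mB AB; rewrite /prob.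
by apply: fine_le; rewrite ?fin_num_measure //; apply: le_measure; rewrite ?inE.
Qed.

Lemma prob_neq0_sub {A B : set T} : measurable A -> measurable B -> A `<=` B ->
  prob P A != 0 -> prob P B != 0.
Proof.
move=> mA mB AB A0; rewrite gt_eqF //.
by rewrite (lt_le_trans _ (prob_le mA mB AB)) // lt_neqAle eq_sym A0 prob_ge0.
Qed.

Lemma prob_eq_up_to_null {A B N : set T} : measurable A -> measurable B ->
  measurable N -> P N = 0%E -> A `<=` B -> B `<=` A `|` N ->
  prob P B = prob P A.
Proof.
move=> mA mB mN N0 AB BAN; rewrite /prob; congr fine.
apply/eqP; rewrite eq_le; apply/andP; split; last first.
  by apply: le_measure; rewrite ?inE.
rewrite -(measureU0 mA mN N0); apply: le_measure; rewrite ?inE //.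
exact: measurableU.
Qed.

Lemma condP_bayes {A B C : set T} :
  measurable A -> measurable B -> measurable C ->
  prob P (A `&` (B `&` C)) != 0 ->
  condP P A (B `&` C) * condP P B C = condP P B (A `&` C) * condP P A C.
Proof.
move=> mA mB mC ABC0.
have mABC : measurable (A `&` (B `&` C)) by do 2 apply: measurableI => //.
have BC0 : prob P (B `&` C) != 0.
  exact: (prob_neq0_sub mABC (measurableI _ _ mB mC) (@subIsetr _ _ _) ABC0).
have AC0 : prob P (A `&` C) != 0.
  by apply: (prob_neq0_sub mABC (measurableI _ _ mA mC) _ ABC0) => w [? [_ ?]].
by rewrite /condP !mulrA !divfK // setICA.
Qed.

End ProbabilityFacts.

Lemma measurable_level {d : measure_display} {T : measurableType d}
  {f : T -> bool} (b : bool) :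
  measurable [set w | f w] -> measurable [set w | f w = b].
Proof.
case: b => // mf; rewrite (_ : [set w | f w = false] = ~` [set w | f w]).
  exact: measurableC.
by apply/funext => w; apply/propext; rewrite /setC /=; case: (f w); split.
Qed.

Lemma measurable_observed {d : measure_display} {T : measurableType d}
  {D : T -> bool} {V : bool -> T -> bool} :
  measurable [set w | D w] -> (forall b, measurable [set w | V b w]) ->
  measurable [set w | V (D w) w].
Proof.
move=> mD mV.
rewrite (_ : [set w | V (D w) w] = ([set w | D w] `&` [set w | V true w])
    `|` (~` [set w | D w] `&` [set w | V false w])).
  by apply: measurableU; apply: measurableI => //; apply: measurableC.
apply/funext => w; apply/propext; rewrite /setC /=.
by case: (D w); split => [|[[]|[]]]; by [left|right|].
Qed.

Lemma divr_gt0_num {F : numFieldType} {u v : F} : 0 < u / v -> u != 0.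
Proof. by apply: contraTneq => ->; rewrite mul0r ltxx. Qed.

Lemma divr_gt0_den {F : numFieldType} {u v : F} : 0 < u / v -> v != 0.
Proof. by apply: contraTneq => ->; rewrite invr0 mulr0 ltxx. Qed.

(* A field identity combining the identification formulas (e_b m_b) of the two
   arms with Bayes' rule (m_b p_b = q_b s): the factor s cancels. *)
Lemma risk_ratio_decomposition (F : fieldType) (e1 e0 m1 m0 p1 p0 q1 q0 s : F) :
  e0 != 0 -> m1 != 0 -> m0 != 0 -> p1 != 0 -> p0 != 0 ->
  m1 * p1 = q1 * s -> m0 * p0 = q0 * s ->
  (e1 * m1) / (e0 * m0) = e1 / e0 * ((q1 / q0) / (p1 / p0)).
Proof.
move=> e00 m10 m00 p10 p00 bayes1 bayes0.
have mp1 : m1 * p1 != 0 by rewrite mulf_neq0.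
have mp0 : m0 * p0 != 0 by rewrite mulf_neq0.
have s0 : s != 0 by apply: contraNneq mp1; rewrite bayes1 => ->; rewrite mulr0.
have q00 : q0 != 0 by apply: contraNneq mp0; rewrite bayes0 => ->; rewrite mul0r.
have -> : m1 = q1 * s / p1 by rewrite -bayes1 mulfK.
have -> : m0 = q0 * s / p0 by rewrite -bayes0 mulfK.
by field; rewrite e00 s0 q00 p10 p00.
Qed.

Section Identification.
Context {d : measure_display} {T : measurableType d} {R : realType}
        {P : probability T R}.
Context {D : T -> bool} {Mpo : bool -> T -> bool}
        {Ypo : bool -> bool -> T -> bool} {C : set T}.
Hypothesis mM : forall b, measurable [set w | Mpo b w].
Hypothesis mY : forall b c, measurable [set w | Ypo b c w].
Hypothesis mC : measurable C.
Hypothesis hY0 : forall b, P [set w | Ypo b false w] = 0%E.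
Hypothesis hCI : forall b, cond_indep_pair P D (Mpo b) (Ypo b true) C.

Local Notation Mobs := (fun w => Mpo (D w) w).
Local Notation Yobs := (fun w => Ypo (D w) (Mpo (D w) w) w).
Local Notation Yd b := (fun w => Ypo b (Mpo b w) w).

Lemma measurable_Yd (b : bool) : measurable [set w | Yd b w].
Proof. exact: measurable_observed (mM b) (mY b). Qed.

(* Since Y(b,0) = 0 a.s., the outcome Y(b) = Y(b, M(b)) is, up to a null
   event, the event {M(b) = 1, Y(b,1) = 1}. *)
Lemma prob_potential_outcome (b : bool) :
  prob P ([set w | Yd b w] `&` C)
  = prob P ([set w | Mpo b w] `&` [set w | Ypo b true w] `&` C).
Proof.
apply: (prob_eq_up_to_null P _ _ _ (hY0 b)) => //.
- by do 2 apply: measurableI => //.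
- exact: measurableI (measurable_Yd b) mC.
- by move=> w [[/= -> ?] ?].
- by move=> w [/=]; case: (Mpo b w) => ? ?; [left|right].
Qed.

Lemma consistency (b : bool) :
  [set w | Yobs w] `&` ([set w | D w = b] `&` [set w | Mobs w] `&` C)
  = [set w | D w = b] `&` [set w | Mpo b w] `&` [set w | Ypo b true w] `&` C.
Proof.
apply/funext => w; apply/propext; split => /=.
  by move=> [Y [[Db M] Cw]]; subst b; rewrite M in Y.
by move=> [[[Db M] Y] Cw]; subst b; rewrite M.
Qed.

Lemma identification (b : bool) :
  0 < condP P [set w | D w = b] C ->
  0 < condP P [set w | Mobs w] ([set w | D w = b] `&` C) ->
  condE P (Yd b) C
  = condE P Yobs ([set w | D w = b] `&` [set w | Mobs w] `&` C)
    * condP P [set w | Mobs w] ([set w | D w = b] `&` C).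
Proof.
rewrite /condE /condP => posD posM.
have C0 := divr_gt0_den posD; have DC0 := divr_gt0_num posD.
have DMC0 := divr_gt0_num posM.
rewrite setIA (setIC [set w | Mobs w]) in DMC0 *.
rewrite consistency mulrA divfK // prob_potential_outcome.
(* conditional independence: P(D=b, M(b), Y(b,1), C) P(C)
                               = P(D=b, C) P(M(b), Y(b,1), C) *)
apply/eqP; rewrite eqr_div //; apply/eqP.
by rewrite mulrC -(hCI b b true true) mulrC.
Qed.

End Identification.

(* Mpo d = M(d), Ypo d m = Y(d,m); observed M = M(D), Y = Y(D,M). *)
Theorem mainTheorem6 (d : measure_display) (T : measurableType d) (R : realType)
  (P : probability T R) (XT : Type) (X : T -> XT) (x : XT)
  (D : T -> bool) (Mpo : bool -> T -> bool) (Ypo : bool -> bool -> T -> bool)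
  (mD : measurable [set w | D w])
  (mM : forall b, measurable [set w | Mpo b w])
  (mY : forall b c, measurable [set w | Ypo b c w])
  (mX : measurable [set w | X w = x])
  (hY0 : forall b, P [set w | Ypo b false w] = 0%E)
  (hCI : forall b, cond_indep_pair P D (Mpo b) (Ypo b true) [set w | X w = x])
  (hposD : forall b, 0 < condP P [set w | D w = b] [set w | X w = x])
  (hposM : forall b, 0 < condP P [set w | Mpo (D w) w]
                            ([set w | D w = b] `&` [set w | X w = x]))
  (hposY : 0 < condE P (fun w => Ypo (D w) (Mpo (D w) w) w)
                 ([set w | D w = false] `&` [set w | Mpo (D w) w]
                   `&` [set w | X w = x])) :
  let Xx := [set w | X w = x] in
  let Mobs := fun w => Mpo (D w) w in
  let Yobs := fun w => Ypo (D w) (Mobs w) w in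
  let Yd := fun b w => Ypo b (Mpo b w) w in
  condE P (Yd true) Xx / condE P (Yd false) Xx
  = (condE P Yobs ([set w | D w = true] `&` [set w | Mobs w] `&` Xx)
     / condE P Yobs ([set w | D w = false] `&` [set w | Mobs w] `&` Xx))
    * ((condP P [set w | D w = true] ([set w | Mobs w] `&` Xx)
        / condP P [set w | D w = false] ([set w | Mobs w] `&` Xx))
       / (condP P [set w | D w = true] Xx / condP P [set w | D w = false] Xx)).
Proof.
move=> Xx Mobs Yobs Yd; rewrite {}/Xx {}/Yobs {}/Mobs {}/Yd.
rewrite !(identification mM mY mX hY0 hCI) //.
have mMobs := measurable_observed mD mM.
have bayes b := condP_bayes P mMobs (measurable_level b mD) mX.
apply: risk_ratio_decomposition.
- exact: lt0r_neq0 hposY.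
- exact: lt0r_neq0 (hposM true).
- exact: lt0r_neq0 (hposM false).
- exact: lt0r_neq0 (hposD true).
- exact: lt0r_neq0 (hposD false).
- exact: bayes (divr_gt0_num (hposM true)).
- exact: bayes (divr_gt0_num (hposM false)).
Qed.
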